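(* Let $d\ge 2$, $s\ge1$ and $(\alpha,\beta) \in \mathsf{Brac}_{d,s}$. Then for every $i \in [d]$ with $\beta_i \geq 1-1/s$, $$\sqrt{\alpha_i}\sqrt{s \beta_i - (s-1)} \leq s \sum_{j\in[d],\,j \neq i} \sqrt{\alpha_j \beta_j}.$$
   Context: $[d]=\{1,\dots,d\}$, $\Delta_d=\{\alpha\in\mathbb R^d:\alpha_i\ge0,\ \sum_i\alpha_i=1\}$. For $s\ge1$, $\mathsf{Brac}_{d,s}$ is the set of $(\alpha,\beta)\in\Delta_d^2$ for which there exist $A_1,\dots,A_d,B_1,\dots,B_d\in M_s(\mathbb C)$ with $\sum_i A_iA_i^*=\sum_iB_iB_i^*=I_s$, $\sum_iA_iB_i^*=0$, and $\tfrac1s\|A_i\|_F^2=\alpha_i$, $\tfrac1s\|B_i\|_F^2=\beta_i$ for all $i$, where $\|X\|_F=\operatorname{Tr}(XX^* )^{1/2}$. *)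

From HB Require Import structures.
From mathcomp Require Import all_boot all_order all_algebra.
From mathcomp Require Import reals complex.
Set Implicit Arguments. Unset Strict Implicit. Unset Printing Implicit Defensive.
Import Order.TTheory GRing.Theory Num.Theory.
Local Open Scope ring_scope.

Definition adjmx (R : realType) (m n : nat) (A : 'M[complex R]_(m, n)) : 'M[complex R]_(n, m) :=
  (map_mx (@conjc R) A)^T.

Definition frob2 (R : realType) (m n : nat) (X : 'M[complex R]_(m, n)) : R :=
  \sum_(j < m) \sum_(k < n) (@complex.Re R (X j k) ^+ 2 + @complex.Im R (X j k) ^+ 2).

Definition simplex (R : realType) (d : nat) (a : 'I_d -> R) : Prop :=
  (forall i, 0 <= a i) /\ \sum_(i < d) a i = 1.

Definition Brac (R : realType) (d s : nat) (alpha beta : 'I_d -> R) : Prop :=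
  simplex alpha /\ simplex beta /\
  exists (A B : 'I_d -> 'M[complex R]_s),
    \sum_(i < d) A i *m adjmx (A i) = 1%:M /\
    \sum_(i < d) B i *m adjmx (B i) = 1%:M /\
    \sum_(i < d) A i *m adjmx (B i) = 0 /\
    (forall i, frob2 (A i) / s%:R = alpha i) /\
    (forall i, frob2 (B i) / s%:R = beta i).

From HB Require Import structures.
From mathcomp Require Import all_boot all_order all_algebra.
From mathcomp Require Import reals complex.
From mathcomp Require Import ring lra.
Import Order.TTheory GRing.Theory Num.Theory.
Set Implicit Arguments. Unset Strict Implicit. Unset Printing Implicit Defensive.
Local Open Scope ring_scope.

(* Let A, B witness (alpha, beta) in Brac_{d,s} and write ||.|| for the
   Frobenius norm.  Since sum_j B_j B_j^* = 1, ||X||^2 = sum_j ||X B_j||^2, and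
   submultiplicativity gives ||X B_i||^2 >= c ||X||^2 with
   c = 1 - sum_{j <> i} ||B_j||^2 = s beta_i - (s - 1).  When c > 0 the square
   matrix B_i is invertible and the same bound holds for B_i^*.  Applied to A_i,
   with A_i B_i^* = - sum_{j <> i} A_j B_j^* and the triangle inequality, this
   yields c ||A_i||^2 <= (sum_{j <> i} ||A_j|| ||B_j||)^2, i.e.
   c s alpha_i <= (s sum_{j <> i} sqrt (alpha_j beta_j))^2. *)

Lemma discriminant_le (F : realFieldType) (a b c : F) :
  0 <= c -> (forall t, 0 <= a - 2 * t * b + t ^+ 2 * c) -> b ^+ 2 <= a * c.
Proof.
move=> c_ge0 nonneg; have [c0|c_neq0] := eqVneq c 0.
  rewrite c0 mulr0; have [->|b_neq0] := eqVneq b 0; first by rewrite expr0n.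
  have := nonneg ((a + 1) / (2 * b)); rewrite c0 mulr0 addr0.
  have -> : 2 * ((a + 1) / (2 * b)) * b = a + 1 by field; rewrite b_neq0.
  lra.
have c_gt0 : 0 < c by rewrite lt_def c_neq0.
have := nonneg (b / c).
have -> : a - 2 * (b / c) * b + (b / c) ^+ 2 * c = (a * c - b ^+ 2) / c.
  by field.
by rewrite pmulr_lge0 ?invr_gt0 // subr_ge0.
Qed.

Lemma sqrtrM_le_of_sqr_le (F : rcfType) (a c k x : F) :
  0 <= a -> 1 <= k -> 0 <= x -> c * (k * a) <= x ^+ 2 ->
  Num.sqrt a * Num.sqrt c <= x.
Proof.
move=> a_ge0 k_ge1 x_ge0 le_x2; have [c_le0|c_gt0] := lerP c 0.
  by rewrite (ler0_sqrtr c_le0) mulr0.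
rewrite -sqrtrM // -(ger0_norm x_ge0) -sqrtr_sqr; apply: ler_wsqrtr.
apply: le_trans le_x2; rewrite mulrC ler_wpM2l ?(ltW c_gt0) //.
by rewrite ler_peMl.
Qed.

Section FrobeniusNorm.
Variable R : realType.
Local Notation C := R[i].
Local Notation Re := (@complex.Re R).
Local Notation Im := (@complex.Im R).
Implicit Types x y : C.

Definition sqnormc x : R := Re x ^+ 2 + Im x ^+ 2.

Lemma sqnormc_ge0 x : 0 <= sqnormc x.
Proof. by rewrite addr_ge0 ?sqr_ge0. Qed.

Lemma sqnormc_eq0 x : (sqnormc x == 0) = (x == 0).
Proof.
case: x => a b; rewrite /sqnormc /= paddr_eq0 ?sqr_ge0 // !sqrf_eq0.
by apply/andP/eqP => [[/eqP-> /eqP->] | [-> ->]].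
Qed.

Lemma sqnormcM x y : sqnormc (x * y) = sqnormc x * sqnormc y.
Proof. by case: x => a b; case: y => c d; rewrite /sqnormc /=; ring. Qed.

Lemma sqnormcN x : sqnormc (- x) = sqnormc x.
Proof. by case: x => a b; rewrite /sqnormc /= !sqrrN. Qed.

Lemma sqnormc_conjc x : sqnormc (conjc x) = sqnormc x.
Proof. by case: x => a b; rewrite /sqnormc /= sqrrN. Qed.

Lemma Re_mul_conjc x y : Re (x * conjc y) = Re x * Re y + Im x * Im y.
Proof. by case: x => a b; case: y => c d /=; ring. Qed.

Lemma Re_sum (I : Type) (r : seq I) (P : pred I) (F : I -> C) :
  Re (\sum_(i <- r | P i) F i) = \sum_(i <- r | P i) Re (F i).
Proof. exact: (raddf_sum (@complex.Re R : Rcomplex R -> R)). Qed.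

Lemma adjmxE m n (X : 'M[C]_(m, n)) i j : adjmx X i j = conjc (X j i).
Proof. by rewrite !mxE. Qed.

Section Frobenius.
Variables m n : nat.
Implicit Types X Y : 'M[C]_(m, n).

Definition frob_dot X Y : R := \sum_j \sum_k Re (X j k * conjc (Y j k)).

Definition frob X : R := Num.sqrt (frob2 X).

Lemma frob2E X : frob2 X = \sum_j \sum_k sqnormc (X j k).
Proof. by []. Qed.

Lemma frob2_dot X : frob2 X = frob_dot X X.
Proof.
by apply: eq_bigr => j _; apply: eq_bigr => k _; rewrite Re_mul_conjc !expr2.
Qed.

Lemma frob2_ge0 X : 0 <= frob2 X.
Proof. by do 2!apply: sumr_ge0 => ? _; apply: sqnormc_ge0. Qed.

Lemma frob2_eq0 X : (frob2 X == 0) = (X == 0).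
Proof.
apply/eqP/eqP => [|->]; last first.
  rewrite frob2E big1 // => j _; rewrite big1 // => k _.
  by rewrite mxE; apply/eqP; rewrite sqnormc_eq0.
have row_ge0 j : true -> 0 <= \sum_k sqnormc (X j k).
  by move=> _; apply: sumr_ge0 => k _; apply: sqnormc_ge0.
move=> /(psumr_eq0P row_ge0) X0; apply/matrixP => j k; rewrite mxE; apply/eqP.
have entry_ge0 l : true -> 0 <= sqnormc (X j l) by move=> _; apply: sqnormc_ge0.
by rewrite -sqnormc_eq0; move/(psumr_eq0P entry_ge0): (X0 j isT) => ->.
Qed.

Lemma frob2_0 : frob2 (0 : 'M[C]_(m, n)) = 0.
Proof. by apply/eqP; rewrite frob2_eq0. Qed.

Lemma frob2N X : frob2 (- X) = frob2 X.
Proof.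
by rewrite !frob2E; apply: eq_bigr => j _; apply: eq_bigr => k _; rewrite mxE sqnormcN.
Qed.

Lemma frob2_rows X : frob2 X = \sum_j frob2 (row j X).
Proof.
rewrite frob2E; apply: eq_bigr => j _.
by rewrite /frob2 big_ord1; apply: eq_bigr => k _; rewrite mxE.
Qed.

Lemma frob_ge0 X : 0 <= frob X.
Proof. exact: sqrtr_ge0. Qed.

Lemma sqr_frob X : frob X ^+ 2 = frob2 X.
Proof. exact/sqr_sqrtr/frob2_ge0. Qed.

Lemma frob_dot_sqr_le X Y : frob_dot X Y ^+ 2 <= frob2 X * frob2 Y.
Proof.
apply: discriminant_le => [|t]; first exact: frob2_ge0.
have -> : frob2 X - 2 * t * frob_dot X Y + t ^+ 2 * frob2 Y =
    frob2 (X - (t%:C)%C *: Y).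
  rewrite !frob2E /frob_dot !mulr_sumr -sumrB -big_split; apply: eq_bigr => j _.
  rewrite !mulr_sumr -sumrB -big_split; apply: eq_bigr => k _.
  rewrite !mxE Re_mul_conjc /sqnormc /=.
  by case: (X j k) => a b; case: (Y j k) => c d /=; ring.
exact: frob2_ge0.
Qed.

Lemma frob_dot_le X Y : frob_dot X Y <= frob X * frob Y.
Proof.
apply: le_trans (ler_norm _) _; rewrite -sqrtr_sqr /frob -sqrtrM ?frob2_ge0 //.
exact/ler_wsqrtr/frob_dot_sqr_le.
Qed.

Lemma frob_dot_tr X Y : frob_dot X Y = Re (\tr (X *m adjmx Y)).
Proof.
rewrite /mxtrace Re_sum; apply: eq_bigr => j _; rewrite mxE Re_sum.
by apply: eq_bigr => k _; rewrite adjmxE.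
Qed.

Lemma frob_dot_suml (I : Type) (r : seq I) (P : pred I) (F : I -> 'M_(m, n)) Y :
  frob_dot (\sum_(i <- r | P i) F i) Y = \sum_(i <- r | P i) frob_dot (F i) Y.
Proof.
rewrite frob_dot_tr mulmx_suml (raddf_sum (@mxtrace _ m)) Re_sum.
by apply: eq_bigr => i _; rewrite frob_dot_tr.
Qed.

Lemma frob_sum_le (I : Type) (r : seq I) (P : pred I) (F : I -> 'M_(m, n)) :
  frob (\sum_(i <- r | P i) F i) <= \sum_(i <- r | P i) frob (F i).
Proof.
set S := \sum_(i <- r | P i) F i.
have : frob S ^+ 2 <= (\sum_(i <- r | P i) frob (F i)) * frob S.
  rewrite sqr_frob frob2_dot {1}/S frob_dot_suml mulr_suml.
  by apply: ler_sum => i _; apply: frob_dot_le.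
have : 0 <= \sum_(i <- r | P i) frob (F i) by apply: sumr_ge0 => i _; apply: frob_ge0.
have := frob_ge0 S; nra.
Qed.

End Frobenius.

Lemma adjmxM m n p (X : 'M[C]_(m, n)) (Y : 'M[C]_(n, p)) :
  adjmx (X *m Y) = adjmx Y *m adjmx X.
Proof.
apply/matrixP => i j; rewrite adjmxE !mxE rmorph_sum; apply: eq_bigr => k _.
by rewrite !adjmxE rmorphM mulrC.
Qed.

Lemma adjmxK m n (X : 'M[C]_(m, n)) : adjmx (adjmx X) = X.
Proof. by apply/matrixP => i j; rewrite !adjmxE conjcK. Qed.

Lemma frob2_adjmx m n (X : 'M[C]_(m, n)) : frob2 (adjmx X) = frob2 X.
Proof.
rewrite !frob2E exchange_big; apply: eq_bigr => j _; apply: eq_bigr => k _.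
by rewrite adjmxE sqnormc_conjc.
Qed.

Lemma frob_dot_mulmxl m n p (X : 'M[C]_(m, n)) (B : 'M[C]_(n, p)) Z :
  frob_dot (X *m B) Z = frob_dot X (Z *m adjmx B).
Proof. by rewrite !frob_dot_tr adjmxM adjmxK mulmxA. Qed.

(* The complex Cauchy-Schwarz inequality, from the real one applied to u and w v. *)
Lemma sqnormc_row_dot_le n (u v : 'rV[C]_n) :
  sqnormc ((u *m adjmx v) 0 0) <= frob2 u * frob2 v.
Proof.
set w := (u *m adjmx v) 0 0.
have wE : w = \sum_k u 0 k * conjc (v 0 k).
  by rewrite /w mxE; apply: eq_bigr => k _; rewrite adjmxE.
have dot_uwv : frob_dot u (w *: v) = sqnormc w.
  have -> : sqnormc w = Re (conjc w * w) by rewrite mulrC Re_mul_conjc /sqnormc !expr2.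
  rewrite [X in conjc w * X]wE mulr_sumr Re_sum /frob_dot big_ord1.
  by apply: eq_bigr => k _; rewrite mxE rmorphM /= mulrCA.
have frob2_wv : frob2 (w *: v) = sqnormc w * frob2 v.
  rewrite !frob2E mulr_sumr; apply: eq_bigr => j _; rewrite mulr_sumr.
  by apply: eq_bigr => k _; rewrite mxE sqnormcM.
have := frob_dot_sqr_le u (w *: v); rewrite dot_uwv frob2_wv mulrCA expr2.
have [w_gt0|w_le0 _] := ltrP 0 (sqnormc w); first by rewrite ler_pM2l.
by rewrite (le_trans w_le0) // mulr_ge0 ?frob2_ge0.
Qed.

Lemma frob2_mul_adjmx_le m p n (X : 'M[C]_(m, n)) (Y : 'M[C]_(p, n)) :
  frob2 (X *m adjmx Y) <= frob2 X * frob2 Y.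
Proof.
rewrite (frob2_rows X) (frob2_rows Y) big_distrlr /= frob2E.
apply: ler_sum => j _; apply: ler_sum => l _.
have -> : (X *m adjmx Y) j l = (row j X *m adjmx (row l Y)) 0 0.
  by rewrite !mxE; apply: eq_bigr => k _; rewrite !adjmxE !mxE.
exact: sqnormc_row_dot_le.
Qed.

Lemma frob_mul_adjmx_le m p n (X : 'M[C]_(m, n)) (Y : 'M[C]_(p, n)) :
  frob (X *m adjmx Y) <= frob X * frob Y.
Proof. by rewrite /frob -sqrtrM ?frob2_ge0 // ler_wsqrtr // frob2_mul_adjmx_le. Qed.

Lemma frob2_mulmx_le m n p (X : 'M[C]_(m, n)) (Y : 'M[C]_(n, p)) :
  frob2 (X *m Y) <= frob2 X * frob2 Y.
Proof. by rewrite -(frob2_adjmx Y) -{1}(adjmxK Y) frob2_mul_adjmx_le. Qed.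

Section ResolutionOfIdentity.
Variables (I : finType) (s n : nat) (B : I -> 'M[C]_(s, n)).
Hypothesis sum_B_adjmx : \sum_j B j *m adjmx (B j) = 1%:M.

Lemma frob2_sum_mulmx m (X : 'M[C]_(m, s)) : frob2 X = \sum_j frob2 (X *m B j).
Proof.
rewrite frob2_dot frob_dot_tr -{1}(mulmx1 X) -sum_B_adjmx mulmx_sumr mulmx_suml.
rewrite (raddf_sum (@mxtrace _ m)) Re_sum; apply: eq_bigr => j _.
by rewrite frob2_dot frob_dot_tr adjmxM !mulmxA.
Qed.

Lemma frob2_mulmx_ge m (X : 'M[C]_(m, s)) i :
  (1 - \sum_(j | j != i) frob2 (B j)) * frob2 X <= frob2 (X *m B i).
Proof.
have := frob2_sum_mulmx X; rewrite (bigD1 i) //= => X_split.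
have : \sum_(j | j != i) frob2 (X *m B j) <= frob2 X * \sum_(j | j != i) frob2 (B j).
  by rewrite mulr_sumr; apply: ler_sum => j _; apply: frob2_mulmx_le.
lra.
Qed.

End ResolutionOfIdentity.

Lemma unitmx_of_frob2_mulmx_ge s (B : 'M[C]_s) c : 0 < c ->
  (forall v : 'rV[C]_s, c * frob2 v <= frob2 (v *m B)) -> B \in unitmx.
Proof.
move=> c_gt0 B_ge; rewrite unitmxE unitfE; apply/negP => /det0P [v v_neq0 vB0].
move: (B_ge v); rewrite vB0 frob2_0 pmulr_rle0 // => v_le0.
by move: v_neq0; rewrite -frob2_eq0 eq_le v_le0 frob2_ge0.
Qed.

Lemma frob2_mul_adjmx_ge s (B : 'M[C]_s) c : 0 < c ->
  (forall m (X : 'M[C]_(m, s)), c * frob2 X <= frob2 (X *m B)) ->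
  forall m (Z : 'M[C]_(m, s)), c * frob2 Z <= frob2 (Z *m adjmx B).
Proof.
move=> c_gt0 B_ge m Z.
(* With U := Z B^-1, ||Z||^2 = <U B, Z> = <U, Z B^*>; conclude by Cauchy-Schwarz. *)
have B_unit := unitmx_of_frob2_mulmx_ge c_gt0 (B_ge 1%N).
set U := Z *m invmx B.
have UB : U *m B = Z by rewrite mulmxKV.
have Z_dot : frob2 Z = frob_dot U (Z *m adjmx B).
  by rewrite frob2_dot -frob_dot_mulmxl UB.
have cauchy_schwarz := frob_dot_sqr_le U (Z *m adjmx B).
rewrite -Z_dot in cauchy_schwarz.
have U_le := B_ge _ U; rewrite UB in U_le.
have [Z_gt0|Z_le0] := ltrP 0 (frob2 Z); last first.
  by rewrite (le_trans _ (frob2_ge0 _)) // pmulr_rle0.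
rewrite -(ler_pM2l Z_gt0) mulrCA -expr2.
rewrite (le_trans (ler_wpM2l (ltW c_gt0) cauchy_schwarz)) // mulrA.
by rewrite ler_wpM2r ?frob2_ge0.
Qed.

Lemma frob2_le_of_sum_mul_adjmx_eq0 (I : finType) s (A B : I -> 'M[C]_s) i :
  \sum_j B j *m adjmx (B j) = 1%:M -> \sum_j A j *m adjmx (B j) = 0 ->
  (1 - \sum_(j | j != i) frob2 (B j)) * frob2 (A i)
    <= (\sum_(j | j != i) frob (A j) * frob (B j)) ^+ 2.
Proof.
move=> sum_BB sum_AB; set c := 1 - _.
have [c_gt0|c_le0] := ltrP 0 c; last first.
  by rewrite (le_trans _ (sqr_ge0 _)) // mulr_le0_ge0 ?frob2_ge0.
have AiBi : A i *m adjmx (B i) = - \sum_(j | j != i) A j *m adjmx (B j).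
  by apply/eqP; rewrite -addr_eq0 -(bigD1 i (P := xpredT)) //= sum_AB.
have := frob2_mul_adjmx_ge c_gt0 (fun m X => frob2_mulmx_ge sum_BB X i) (A i).
move/le_trans; apply; rewrite AiBi frob2N -sqr_frob.
rewrite ler_sqr ?nnegrE ?frob_ge0 ?sumr_ge0 // => [|j _]; last first.
  by rewrite mulr_ge0 ?frob_ge0.
apply: le_trans (frob_sum_le _ _ _) _; apply: ler_sum => j _.
exact: frob_mul_adjmx_le.
Qed.

End FrobeniusNorm.

Theorem proposition3p7 (R : realType) (d s : nat) (alpha beta : 'I_d -> R) :
  (2 <= d)%N -> (1 <= s)%N -> Brac s alpha beta ->
  forall i : 'I_d, 1 - 1 / s%:R <= beta i ->
    Num.sqrt (alpha i) * Num.sqrt (s%:R * beta i - (s%:R - 1))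
      <= s%:R * \sum_(j < d | j != i) Num.sqrt (alpha j * beta j).
Proof.
move=> _ s_ge1 [[alpha_ge0 _] [[_ beta_sum]]].
move=> [A [B [_ [sum_BB [sum_AB [A_alpha B_beta]]]]]] i _.
have s_gt0 : 0 < s%:R :> R by rewrite ltr0n.
have unnormalize (M : 'M[R[i]]_s) x : frob2 M / s%:R = x -> frob2 M = s%:R * x.
  by move=> <-; rewrite mulrC divfK ?gt_eqF.
have frob2A j := unnormalize _ _ (A_alpha j).
have frob2B j := unnormalize _ _ (B_beta j).
have beta_rest : \sum_(j | j != i) beta j = 1 - beta i.
  by rewrite -beta_sum [in RHS](bigD1 i) //= addrAC subrr add0r.
have defect : 1 - \sum_(j | j != i) frob2 (B j) = s%:R * beta i - (s%:R - 1).
  by rewrite (eq_bigr _ (fun j _ => frob2B j)) -mulr_sumr beta_rest; ring.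
have cross_terms : \sum_(j | j != i) frob (A j) * frob (B j)
    = s%:R * \sum_(j < d | j != i) Num.sqrt (alpha j * beta j).
  rewrite mulr_sumr; apply: eq_bigr => j _.
  rewrite /frob frob2A frob2B -sqrtrM ?mulr_ge0 ?(ltW s_gt0) //.
  by rewrite mulrACA -expr2 sqrtrM ?sqr_ge0 // sqrtr_sqr gtr0_norm.
have := frob2_le_of_sum_mul_adjmx_eq0 i sum_BB sum_AB.
rewrite defect cross_terms frob2A; apply: sqrtrM_le_of_sqr_le => //.
- by rewrite ler1n.
- by rewrite mulr_ge0 ?(ltW s_gt0) ?sumr_ge0 // => j _; apply: sqrtr_ge0.
Qed.
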